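(* Let $G$ be a simplicial group and $\tilde G$ its dummy. Then the geometric realization $|\tilde G|$ is contractible.
   Context: Let $B$ be the cosimplicial simplicial pointed set with $B^n_m$ the set of non-strictly increasing partial maps $b\colon[m]\dashrightarrow[n]$ (with domain $\operatorname{dom}b\subset[m]$), marked element $o^n_m$ the map with empty domain; the simplicial structure in $m$ is given by precomposition (for $\theta\colon[m']\to[m]$, $b\mapsto b\circ\theta$ with domain $\theta^{-1}(\operatorname{dom}b)$) and the cosimplicial structure in $n$ by postcomposition. The dummy $\tilde G$ is the simplicial group with $\tilde G_n$ the group (under pointwise multiplication) of base-point-preserving simplicial maps $B^n\to G$ (the marked elements going to $1$), with structure homomorphisms induced by the cosimplicial structure of $B$. *)

From HB Require Import structures.
From mathcomp Require Import all_boot all_order all_algebra.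
From mathcomp Require Import all_classical all_reals all_analysis.
From mathcomp Require monoid.

Set Implicit Arguments.
Unset Strict Implicit.
Unset Printing Implicit Defensive.

Import Order.TTheory GRing.Theory Num.Theory.
Import numFieldNormedType.Exports.

Local Open Scope classical_set_scope.
Local Open Scope ring_scope.
Local Open Scope quotient_scope.

(** * The simplex category.
    The object [n] = {0,...,n} is the ordinal type 'I_n.+1; a morphism
    [m] -> [n] is a (finite) function that is weakly increasing. *)
Definition mono (m n : nat) (f : {ffun 'I_m.+1 -> 'I_n.+1}) : bool :=
  [forall i : 'I_m.+1, forall j : 'I_m.+1, (i <= j)%N ==> (f i <= f j)%N].

Record sSet := SSet {
  ss_obj : nat -> Type;
  ss_map : forall m n : nat, {ffun 'I_m.+1 -> 'I_n.+1} -> ss_obj n -> ss_obj m }.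
Arguments ss_map s {m n}.

Definition is_simplicial (X : sSet) : Prop :=
  (forall n (x : ss_obj X n), ss_map X [ffun i => i] x = x) /\
  (forall k m n (phi : {ffun 'I_k.+1 -> 'I_m.+1}) (th : {ffun 'I_m.+1 -> 'I_n.+1}),
     mono phi -> mono th ->
     forall x : ss_obj X n,
       ss_map X [ffun i => th (phi i)] x = ss_map X phi (ss_map X th x)).

Record sGroup := SGroup {
  sg_obj : nat -> monoid.Group.type;
  sg_map : forall m n : nat, {ffun 'I_m.+1 -> 'I_n.+1} -> sg_obj n -> sg_obj m }.
Arguments sg_map s {m n}.

Definition sg_sSet (G : sGroup) : sSet :=
  @SSet (fun n => monoid.Group.sort (sg_obj G n)) (@sg_map G).

Definition is_simplicial_group (G : sGroup) : Prop :=
  is_simplicial (sg_sSet G) /\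
  (forall m n (th : {ffun 'I_m.+1 -> 'I_n.+1}), mono th ->
     sg_map G th monoid.one = monoid.one /\
     forall x y : sg_obj G n,
       sg_map G th (monoid.mul x y) = monoid.mul (sg_map G th x) (sg_map G th y)).

(** * The cosimplicial simplicial pointed set B.
    B^n_m = weakly increasing partial maps [m] -/-> [n], encoded as finite
    functions 'I_m.+1 -> option 'I_n.+1 (None = outside the domain). *)
Definition pmono (m n : nat) (b : {ffun 'I_m.+1 -> option 'I_n.+1}) : bool :=
  [forall i : 'I_m.+1, forall j : 'I_m.+1, (i <= j)%N ==>
     (if b i is Some x then (if b j is Some y then (x <= y)%N else true) else true)].

Definition Bobj (n m : nat) := {b : {ffun 'I_m.+1 -> option 'I_n.+1} | pmono b}.

Lemma pmono_none (n m : nat) : pmono ([ffun _ => None] : {ffun 'I_m.+1 -> option 'I_n.+1}).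
Proof. by apply/forallP => i; apply/forallP => j; rewrite !ffunE; apply/implyP. Qed.

Definition Bo (n m : nat) : Bobj n m := exist _ [ffun _ => None] (pmono_none n m).

(** simplicial structure: precomposition b |-> b o th
    (for monotone th the composite is again weakly increasing) *)
Definition Bpre (n m m' : nat) (th : {ffun 'I_m'.+1 -> 'I_m.+1}) (b : Bobj n m) :
  Bobj n m' := insubd (Bo n m') [ffun i => sval b (th i)].

Definition Bpost (n' n m : nat) (al : {ffun 'I_n'.+1 -> 'I_n.+1}) (b : Bobj n' m) :
  Bobj n m :=
  if mono al then insubd (Bo n m) [ffun i => omap al (sval b i)] else Bo n m.

Record dummy_elt (G : sGroup) (n : nat) := DummyElt {
  de_fun : forall m, Bobj n m -> sg_obj G m;
  de_pt : forall m, de_fun (Bo n m) = monoid.one;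
  de_nat : forall m m' (th : {ffun 'I_m'.+1 -> 'I_m.+1}), mono th ->
    forall b : Bobj n m, de_fun (Bpre th b) = sg_map G th (de_fun b) }.

Lemma insubd_Bo (n m : nat) (f : {ffun 'I_m.+1 -> option 'I_n.+1}) :
  f = [ffun _ => None] -> insubd (Bo n m) f = Bo n m.
Proof.
move=> ->; apply: val_inj; rewrite val_insubd.
by case: ifP.
Qed.

Lemma Bpost_Bo (n' n m : nat) (al : {ffun 'I_n'.+1 -> 'I_n.+1}) :
  Bpost al (Bo n' m) = Bo n m.
Proof.
rewrite /Bpost; case: ifP => // _; apply: insubd_Bo.
by apply/ffunP => i; rewrite !ffunE.
Qed.

Lemma Bpre_Bo (n m m' : nat) (th : {ffun 'I_m'.+1 -> 'I_m.+1}) :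
  Bpre th (Bo n m) = Bo n m'.
Proof. by apply: insubd_Bo; apply/ffunP => i; rewrite !ffunE. Qed.

Lemma pmono_pre (n m m' : nat) (th : {ffun 'I_m'.+1 -> 'I_m.+1}) (b : Bobj n m) :
  mono th -> pmono [ffun i => sval b (th i)].
Proof.
move=> /forallP Hth; case: b => b /= /forallP Hb.
apply/forallP => i; apply/forallP => j; apply/implyP => lij; rewrite !ffunE.
have := forallP (Hb (th i)) (th j).
by have := forallP (Hth i) j; rewrite lij /= => ->.
Qed.

Lemma pmono_post (n' n m : nat) (al : {ffun 'I_n'.+1 -> 'I_n.+1}) (b : Bobj n' m) :
  mono al -> pmono [ffun i => omap al (sval b i)].
Proof.
move=> /forallP Hal; case: b => b /= /forallP Hb.
apply/forallP => i; apply/forallP => j; apply/implyP => lij; rewrite !ffunE.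
have := forallP (Hb i) j; rewrite lij /=.
case: (b i) => [x|] //=; case: (b j) => [y|] //= lxy.
by have := forallP (Hal x) y; rewrite lxy.
Qed.

Lemma Bpost_pre (n' n m m' : nat) (al : {ffun 'I_n'.+1 -> 'I_n.+1})
  (th : {ffun 'I_m'.+1 -> 'I_m.+1}) (b : Bobj n' m) :
  mono th -> Bpost al (Bpre th b) = Bpre th (Bpost al b).
Proof.
move=> mth; rewrite /Bpost; case: ifP => mal; last by rewrite Bpre_Bo.
apply: val_inj; rewrite /Bpre !val_insubd.
rewrite (pmono_pre b mth) pmono_post //=.
have -> : [ffun i => omap al ([ffun i0 => sval b (th i0)] i)] =
          [ffun i => [ffun i0 => omap al (sval b i0)] (th i)].
  by apply/ffunP => i; rewrite !ffunE.
by [].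
Qed.

Definition dummy_map (G : sGroup) (n' n : nat) (al : {ffun 'I_n'.+1 -> 'I_n.+1})
  (phi : dummy_elt G n) : dummy_elt G n'.
Proof.
refine (@DummyElt G n' (fun m b => de_fun phi (Bpost al b)) _ _).
- by move=> m; rewrite Bpost_Bo de_pt.
- by move=> m m' th mth b; rewrite Bpost_pre // de_nat.
Defined.

Definition dummy (G : sGroup) : sSet := @SSet (dummy_elt G) (@dummy_map G).

Definition simplex_set (R : realType) (n : nat) : set 'rV[R]_n.+1 :=
  [set t | (forall i, 0 <= t ord0 i) /\ \sum_(i < n.+1) t ord0 i = 1].
Arguments simplex_set : clear implicits.

Notation simplex R n := (set_type (simplex_set R n)).

(** the affine map Delta^m -> Delta^n induced by th : [m] -> [n] (on vertices) *)
Definition push (R : realType) (m n : nat) (th : {ffun 'I_m.+1 -> 'I_n.+1})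
  (t : 'rV[R]_m.+1) : 'rV[R]_n.+1 :=
  \row_(j < n.+1) \sum_(i < m.+1 | th i == j) t ord0 i.

Definition sobj (X : sSet) (n : nat) : Type := ss_obj X n.
HB.instance Definition _ (X : sSet) (n : nat) := gen_eqMixin (sobj X n).
HB.instance Definition _ (X : sSet) (n : nat) := gen_choiceMixin (sobj X n).


Definition real_piece (X : sSet) (R : realType) (n : nat) : topologicalType :=
  (discrete_topology (sobj X n) * simplex R n)%type.

Definition real_pts (X : sSet) (R : realType) := {n : nat & real_piece X R n}.

Definition real_gen (X : sSet) (R : realType) (a b : real_pts X R) : Prop :=
  exists (m n : nat) (th : {ffun 'I_m.+1 -> 'I_n.+1}) (x : sobj X n)
         (t : simplex R m) (s : simplex R n),
    [/\ mono th, a = existT (real_piece X R) m (ss_map X th x : sobj X m, t),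
        b = existT (real_piece X R) n (x, s) &
        set_val s = push th (set_val t)].

Definition real_equiv (X : sSet) (R : realType) (a b : real_pts X R) : Prop :=
  forall E : real_pts X R -> real_pts X R -> Prop,
    (forall x, E x x) -> (forall x y, E x y -> E y x) ->
    (forall x y z, E x y -> E y z -> E x z) ->
    (forall x y, real_gen x y -> E x y) -> E a b.

Definition real_rel (X : sSet) (R : realType) : rel (real_pts X R) :=
  fun a b => `[< real_equiv a b >].

Lemma real_rel_refl X R : reflexive (@real_rel X R).
Proof. by move=> a; apply/asboolP => E r _ _ _. Qed.

Lemma real_rel_sym X R : symmetric (@real_rel X R).
Proof.
have H : forall a b, real_rel a b -> @real_rel X R b a.
  move=> a b /asboolP Hab; apply/asboolP => E r s t g.
  exact: (s _ _ (Hab E r s t g)).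
by move=> a b; apply/idP/idP; apply: H.
Qed.

Lemma real_rel_trans X R : transitive (@real_rel X R).
Proof.
move=> b a c /asboolP Hab /asboolP Hbc; apply/asboolP => E r s t g.
exact: (t _ b _ (Hab E r s t g) (Hbc E r s t g)).
Qed.

Definition real_equiv_rel (X : sSet) (R : realType) :=
  EquivRel (@real_rel X R) (@real_rel_refl X R) (@real_rel_sym X R)
    (@real_rel_trans X R).

Definition realization (X : sSet) (R : realType) : topologicalType :=
  quotient_topology {eq_quot (real_equiv_rel X R)}.

Notation unit_interval R := (set_type (`[0, 1]%classic : set R)).

Definition contractible (R : realType) (T : topologicalType) : Prop :=
  exists (x0 : T) (H : (unit_interval R * T)%type -> T),
    [/\ continuous H,
        (forall (s : unit_interval R) (x : T), set_val s = 0 -> H (s, x) = x) &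
        (forall (s : unit_interval R) (x : T), set_val s = 1 -> H (s, x) = x0)].

From HB Require Import structures.
From mathcomp Require Import all_boot all_order all_algebra.
From mathcomp Require Import all_classical all_reals all_analysis.
From mathcomp Require monoid.
From mathcomp Require Import lra.

Set Implicit Arguments.
Unset Strict Implicit.
Unset Printing Implicit Defensive.

Import Order.TTheory GRing.Theory Num.Theory.
Import numFieldNormedType.Exports.

Local Open Scope classical_set_scope.
Local Open Scope ring_scope.
Local Open Scope quotient_scope.

(* Every simplex of the dummy is the base of a cone.  Let rho : B^(n+1) -> B^n
   restrict a partial map to the preimage of {1, ..., n+1} and shift it down.
   For phi in G~_n, the simplex phi o rho of G~_(n+1) has phi as its 0-th face
   and the unit of G~_0 as its vertex 0, and coning commutes with the maps
   0 + (theta + 1) : [m+1] -> [n+1].  Hence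
   (s, [phi, t]) |-> [phi o rho, s e_0 + (1 - s) t]
   is a well-defined homotopy on |G~| from the identity to the constant map at
   the vertex [1].  It is continuous because [0, 1] is locally compact, so that
   [0, 1] x - preserves the quotient topology of the realization. *)

Lemma Bobj_ext n m (b c : Bobj n m) : sval b =1 sval c -> b = c.
Proof. by move=> bc; apply: val_inj; apply/ffunP. Qed.

Lemma Bpre_val n m m' (th : {ffun 'I_m'.+1 -> 'I_m.+1}) (b : Bobj n m) :
  mono th -> sval (Bpre th b) = [ffun i => sval b (th i)].
Proof. by move=> mth; rewrite /Bpre val_insubd pmono_pre. Qed.

Lemma Bpost_val n' n m (al : {ffun 'I_n'.+1 -> 'I_n.+1}) (b : Bobj n' m) :
  mono al -> sval (Bpost al b) = [ffun i => omap al (sval b i)].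
Proof. by move=> mal; rewrite /Bpost mal val_insubd pmono_post. Qed.

Lemma pmono_drop0 n m (b : Bobj n.+1 m) :
  pmono [ffun i => obind (@unlift n.+2 ord0) (sval b i)].
Proof.
case: b => b /= /forallP mb.
apply/forallP => i; apply/forallP => j; apply/implyP => lij; rewrite !ffunE.
have := forallP (mb i) j; rewrite lij /=.
case: (b i) => [x|] //=; case: (b j) => [y|] /= lxy; last by case: unlift.
case: unliftP => [x' Ex|_] //=; case: unliftP => [y' Ey|Ey] //=.
all: by move: lxy; rewrite ?Ex ?Ey ?lift0.
Qed.

Definition Bdrop0 n m (b : Bobj n.+1 m) : Bobj n m :=
  insubd (Bo n m) [ffun i => obind (@unlift n.+2 ord0) (sval b i)].

Lemma Bdrop0_val n m (b : Bobj n.+1 m) :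
  sval (Bdrop0 b) = [ffun i => obind (@unlift n.+2 ord0) (sval b i)].
Proof. by rewrite /Bdrop0 val_insubd pmono_drop0. Qed.

Lemma Bdrop0_Bo n m : Bdrop0 (Bo n.+1 m) = Bo n m.
Proof. by apply: insubd_Bo; apply/ffunP => i; rewrite !ffunE. Qed.

Lemma Bdrop0_pre n m m' (th : {ffun 'I_m'.+1 -> 'I_m.+1}) (b : Bobj n.+1 m) :
  mono th -> Bdrop0 (Bpre th b) = Bpre th (Bdrop0 b).
Proof.
move=> mth; apply: Bobj_ext => i.
by rewrite Bdrop0_val !Bpre_val // !ffunE Bdrop0_val ffunE.
Qed.

Definition coface0 n : {ffun 'I_n.+1 -> 'I_n.+2} := [ffun i => lift ord0 i].

Definition cone_map m n (th : {ffun 'I_m.+1 -> 'I_n.+1}) :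
    {ffun 'I_m.+2 -> 'I_n.+2} :=
  [ffun j => if @unlift m.+2 ord0 j is Some i then lift ord0 (th i) else ord0].

Definition vertex0 n : {ffun 'I_1 -> 'I_n.+2} := [ffun _ => ord0].

Lemma mono_coface0 n : mono (coface0 n).
Proof.
by apply/forallP => i; apply/forallP => j; apply/implyP; rewrite !ffunE !lift0.
Qed.

Lemma mono_vertex0 n : mono (vertex0 n).
Proof. by apply/forallP => i; apply/forallP => j; apply/implyP; rewrite !ffunE. Qed.

Lemma cone_map0 m n (th : {ffun 'I_m.+1 -> 'I_n.+1}) : cone_map th ord0 = ord0.
Proof. by rewrite ffunE unlift_none. Qed.

Lemma cone_mapS m n (th : {ffun 'I_m.+1 -> 'I_n.+1}) i :
  cone_map th (lift ord0 i) = lift ord0 (th i).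
Proof. by rewrite ffunE liftK. Qed.

Lemma mono_cone_map m n (th : {ffun 'I_m.+1 -> 'I_n.+1}) :
  mono th -> mono (cone_map th).
Proof.
move=> /forallP mth; apply/forallP => i; apply/forallP => j; apply/implyP.
case: (unliftP ord0 i) => [i' ->|->]; last by rewrite cone_map0.
case: (unliftP ord0 j) => [j' ->|->]; last by rewrite /= /bump.
rewrite !cone_mapS /= /bump !leq0n !add1n !ltnS => lij.
exact: (implyP (forallP (mth i') j') lij).
Qed.

Lemma unlift_cone_map m n (th : {ffun 'I_m.+1 -> 'I_n.+1}) (j : 'I_m.+2) :
  @unlift n.+2 ord0 (cone_map th j) = omap th (@unlift m.+2 ord0 j).
Proof.
rewrite ffunE; case: (unliftP ord0 j) => [j' _|_] /=.
  by rewrite liftK.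
by rewrite unlift_none.
Qed.

Lemma Bdrop0_coface0 n m (b : Bobj n m) : Bdrop0 (Bpost (coface0 n) b) = b.
Proof.
apply: Bobj_ext => i; rewrite Bdrop0_val ffunE Bpost_val ?mono_coface0 // ffunE.
by case: (sval b i) => //= x; rewrite ffunE liftK.
Qed.

Lemma Bdrop0_cone_map n n' m (th : {ffun 'I_n'.+1 -> 'I_n.+1}) (b : Bobj n'.+1 m) :
  mono th -> Bdrop0 (Bpost (cone_map th) b) = Bpost th (Bdrop0 b).
Proof.
move=> mth; apply: Bobj_ext => i.
rewrite Bdrop0_val ffunE !Bpost_val ?mono_cone_map // !ffunE Bdrop0_val ffunE.
by case: (sval b i) => //= x; rewrite unlift_cone_map.
Qed.

Lemma Bdrop0_vertex0 n m (b : Bobj 0 m) : Bdrop0 (Bpost (vertex0 n) b) = Bo n m.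
Proof.
apply: Bobj_ext => i; rewrite Bdrop0_val ffunE Bpost_val ?mono_vertex0 // !ffunE.
case: (sval b i) => //= x; rewrite ffunE.
by case: unliftP => // k /(congr1 val); rewrite lift0.
Qed.

Section Cone.
Variable G : sGroup.

Lemma dummy_elt_ext n (p q : dummy_elt G n) :
  (forall m (b : Bobj n m), de_fun p b = de_fun q b) -> p = q.
Proof.
case: p => f1 p1 n1; case: q => f2 p2 n2 /= pq.
have f12 : f1 = f2.
  apply: functional_extensionality_dep => m.
  exact: functional_extensionality_dep.
subst f2; congr DummyElt; exact: Prop_irrelevance.
Qed.

Definition cone n (phi : dummy_elt G n) : dummy_elt G n.+1.
Proof.
refine (@DummyElt G n.+1 (fun m b => de_fun phi (Bdrop0 b)) _ _).
- by move=> m; rewrite Bdrop0_Bo de_pt.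
- by move=> m m' th mth b; rewrite Bdrop0_pre // de_nat.
Defined.

Lemma cone_coface0 n (phi : dummy_elt G n) :
  dummy_map (coface0 n) (cone phi) = phi.
Proof. by apply: dummy_elt_ext => m b /=; rewrite Bdrop0_coface0. Qed.

Lemma cone_cone_map n n' (th : {ffun 'I_n'.+1 -> 'I_n.+1}) (phi : dummy_elt G n) :
  mono th -> dummy_map (cone_map th) (cone phi) = cone (dummy_map th phi).
Proof. by move=> mth; apply: dummy_elt_ext => m b /=; rewrite Bdrop0_cone_map. Qed.

Hypothesis sg_map1 : forall m n (th : {ffun 'I_m.+1 -> 'I_n.+1}),
  mono th -> sg_map G th monoid.one = monoid.one.

Definition dummy_unit : dummy_elt G 0.
Proof.
refine (@DummyElt G 0 (fun m _ => monoid.one) _ _) => //.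
by move=> m m' th mth _; rewrite sg_map1.
Defined.

Lemma cone_vertex0 n (phi : dummy_elt G n) :
  dummy_map (vertex0 n) (cone phi) = dummy_unit.
Proof. by apply: dummy_elt_ext => m b /=; rewrite Bdrop0_vertex0 de_pt. Qed.

End Cone.

Section Simplex.
Variable R : realType.

Lemma lift0_eq0 k (i : 'I_k) : (lift ord0 i == ord0 :> 'I_k.+1) = false.
Proof. by rewrite eq_sym (negbTE (neq_lift _ _)). Qed.

Definition cone_coord n (s : R) (t : 'rV[R]_n.+1) : 'rV[R]_n.+2 :=
  \row_j (if @unlift n.+2 ord0 j is Some i then (1 - s) * t ord0 i else s).

Lemma cone_coord0 n s (t : 'rV[R]_n.+1) : cone_coord s t ord0 ord0 = s.
Proof. by rewrite mxE unlift_none. Qed.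

Lemma cone_coordS n s (t : 'rV[R]_n.+1) i :
  cone_coord s t ord0 (lift ord0 i) = (1 - s) * t ord0 i.
Proof. by rewrite mxE liftK. Qed.

Lemma cone_coord_simplex n (s : R) (t : 'rV[R]_n.+1) : 0 <= s <= 1 ->
  simplex_set R n t -> simplex_set R n.+1 (cone_coord s t).
Proof.
move=> /andP[s0 s1] [t_ge0 t_sum]; split.
  move=> j; rewrite mxE; case: unlift => // i.
  by rewrite mulr_ge0 // subr_ge0.
rewrite big_ord_recl cone_coord0.
under eq_bigr => i _ do rewrite cone_coordS.
by rewrite -mulr_sumr t_sum mulr1 addrC subrK.
Qed.

Lemma push_coface0 n (t : 'rV[R]_n.+1) : push (coface0 n) t = cone_coord 0 t.
Proof.
apply/rowP => j; rewrite !mxE; case: (unliftP ord0 j) => [j' ->|->].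
  rewrite ?liftK subr0 mul1r (big_pred1 j') // => i.
  by rewrite ffunE (inj_eq (@lift_inj _ ord0)).
by rewrite ?unlift_none big_pred0 // => i; rewrite ffunE lift0_eq0.
Qed.

Lemma push_cone_map m n (th : {ffun 'I_m.+1 -> 'I_n.+1}) s (t : 'rV[R]_m.+1) :
  push (cone_map th) (cone_coord s t) = cone_coord s (push th t).
Proof.
apply/rowP => j; rewrite !mxE big_mkcond big_ord_recl cone_map0 cone_coord0.
under eq_bigr => i _ do rewrite cone_mapS cone_coordS.
case: (unliftP ord0 j) => [j' ->|->].
  rewrite ?liftK eq_sym lift0_eq0 /= add0r mxE mulr_sumr [RHS]big_mkcond.
  apply: eq_bigr => i _.
  by rewrite (inj_eq (@lift_inj _ ord0)); case: eqP; rewrite ?mxE.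
by rewrite ?unlift_none eqxx /= big1 ?addr0 // => i _; rewrite lift0_eq0.
Qed.

Definition vertex : 'rV[R]_1 := \row_j 1.

Lemma vertex_simplex : simplex_set R 0 vertex.
Proof. by split => [i|]; rewrite ?big_ord1 mxE. Qed.

Lemma push_vertex0 n (t : 'rV[R]_n.+1) : push (vertex0 n) vertex = cone_coord 1 t.
Proof.
apply/rowP => j; rewrite !mxE; case: (unliftP ord0 j) => [j' ->|->].
  by rewrite ?liftK subrr mul0r big_pred0 // => i; rewrite ffunE eq_sym lift0_eq0.
by rewrite ?unlift_none big_mkcond big_ord1 ffunE eqxx mxE.
Qed.

End Simplex.

Section ProductQuotient.
Variables (S T Z : topologicalType) (Q0 : quotType T).
Hypothesis compact_nbhsS : forall (s : S) (N : set S), nbhs s N ->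
  exists C : set S, [/\ compact C, nbhs s C & C `<=` N].

(* Given a compact neighbourhood C of s0, the tube lemma makes the set of q with
   f (C x {q}) inside W open in the quotient, as its preimage is open in T. *)
Lemma prod_quotient_continuous (f : (S * quotient_topology Q0)%type -> Z) :
  continuous (fun p : (S * T)%type => f (p.1, \pi_(quotient_topology Q0) p.2)) ->
  continuous f.
Proof.
move=> cf [s0 q0] W /=; rewrite nbhsE => -[W' [oW' W'f] W'W].
pose U := fun p : (S * T)%type => W' (f (p.1, \pi_(quotient_topology Q0) p.2)).
have oU : open U by apply: (continuousP _).1 cf W' oW'.
have pi_repr : \pi_(quotient_topology Q0) (repr q0) = q0 by rewrite reprK.
have U_s0 : nbhs s0 (fun s => U (s, repr q0)).
  have [[A B] /= [nA nB] sAB] : nbhs (s0, repr q0) U.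
    by apply: open_nbhs_nbhs; split => //; rewrite /U /= pi_repr.
  apply: filterS nA => s As; apply: (sAB (s, _)); split => //.
  exact: nbhs_singleton.
have [C [cC nC CU]] := compact_nbhsS U_s0.
pose V := fun q => forall s, C s -> W' (f (s, q)).
have oV : open (V : set (quotient_topology Q0)).
  rewrite /open /= /quotient_open openE => x Vx.
  apply: ((compact_near_coveringP C).1 cC T (nbhs x) (fun x' s => U (s, x'))).
  move=> s Cs; suff : nbhs (s, x) U by [].
  by apply: open_nbhs_nbhs; split => //; exact: Vx.
have Vq0 : V q0 by move=> s /CU; rewrite /U /= pi_repr.
exists (C, V) => /=; first by split => //; exact: open_nbhs_nbhs.
by case=> s q /= [Cs Vq]; apply: W'W; apply: Vq.
Qed.

End ProductQuotient.

Section UnitInterval.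
Variable R : realType.
Notation I01 := (unit_interval R).

Lemma unit_interval_bounds (s : I01) : 0 <= set_val s <= 1.
Proof. by case: s => x /= x01; move: (set_mem x01); rewrite /= in_itv. Qed.

Definition clamp01 (r : R) : R := Num.min (Num.max r 0) 1.

Lemma clamp01_itv r : `[0, 1]%classic (clamp01 r).
Proof.
rewrite /= in_itv /clamp01 /=; apply/andP; split.
  by rewrite le_min ler01 le_max lexx orbT.
by rewrite ge_min lexx orbT.
Qed.

Lemma clamp01_id r : 0 <= r <= 1 -> clamp01 r = r.
Proof.
case/andP => r0 r1; rewrite /clamp01 maxEle minEle; case: (lerP r 0) => h.
  by rewrite ler01; apply/eqP; rewrite eq_le h r0.
by rewrite r1.
Qed.

Lemma clamp01_dist (a r : R) : 0 <= a <= 1 -> `|a - clamp01 r| <= `|a - r|.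
Proof.
case/andP => a0 a1; rewrite /clamp01 maxEle minEle.
have [r0|r0] := lerP r 0.
  rewrite ler01 subr0 ger0_norm //.
  by apply: le_trans (ler_norm _); lra.
have [r1|r1] := lerP r 1 => //.
rewrite ler0_norm ?subr_le0 // -[X in _ <= X]normrN.
by apply: le_trans (ler_norm _); lra.
Qed.

Definition clamp (r : R) : I01 := exist _ (clamp01 r) (mem_set (clamp01_itv r)).

Lemma clamp_continuous : continuous clamp.
Proof.
apply: (@continuous_comp_initial _ R^o R set_val) => r.
have -> : set_val \o clamp =
    ((fun x : R^o => x) \max (fun=> (0 : R^o))) \min (fun=> (1 : R^o)).
  by apply/funext.
apply: continuous_min; last exact: cvg_cst.
by apply: continuous_max; [exact: cvg_id | exact: cvg_cst].
Qed.

(* A compact neighbourhood of s is the image under clamp of a segment around s. *)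
Lemma unit_interval_compact_nbhs (s0 : I01) (N : set I01) : nbhs s0 N ->
  exists C : set I01, [/\ compact C, nbhs s0 C & C `<=` N].
Proof.
move=> /nbhs_ballP [e /= e0 eN].
set a := set_val s0.
exists (clamp @` `[a - e / 2, a + e / 2]); split.
- apply: continuous_compact; last exact: segment_compact.
  by apply: continuous_subspaceT => x; exact: clamp_continuous.
- apply/nbhs_ballP; exists (e / 2); first by rewrite /= divr_gt0.
  move=> s sa; have : ball a (e / 2) (set_val s) by exact: sa.
  rewrite /= -ball_normE /= ltr_distlC => /andP[lo hi].
  exists (set_val s); first by rewrite /= in_itv /= (ltW lo) (ltW hi).
  by apply: val_inj; rewrite /= clamp01_id // unit_interval_bounds.
- move=> _ [r ar <-]; apply: eN.
  suff : ball a e (clamp01 r) by [].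
  rewrite /= -ball_normE /=.
  apply: (le_lt_trans (clamp01_dist r (unit_interval_bounds s0))).
  move: ar; rewrite /= in_itv /= -ler_distlC => /le_lt_trans; apply.
  by rewrite gtr_pMr // invf_lt1 // ltr1n.
Qed.

Lemma val_unit_interval_continuous : continuous (set_val : I01 -> R).
Proof. exact: (@initial_continuous I01 R set_val). Qed.

End UnitInterval.

Lemma continuous_mx (T Z : topologicalType) m n (f : Z -> 'M[T]_(m, n)) :
  (forall i j, continuous (fun z => f z i j)) -> continuous f.
Proof.
move=> cf z A [P MP sPA]; apply: filterS sPA _.
apply: filter_forall => i; apply: filter_forall => j.
exact: (cf i j z _ (MP i j)).
Qed.

Section ConeRealization.
Variables (R : realType) (G : sGroup).
Hypothesis sg_map1 : forall m n (th : {ffun 'I_m.+1 -> 'I_n.+1}),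
  mono th -> sg_map G th monoid.one = monoid.one.
Notation I01 := (unit_interval R).
Notation X := (dummy G).
Notation Pts := (real_pts X R).
Notation piX := (\pi_(realization X R)).

Definition cone_simplex n (s : I01) (t : simplex R n) : simplex R n.+1 :=
  exist _ (cone_coord (set_val s) (set_val t))
    (mem_set (cone_coord_simplex (unit_interval_bounds s) (set_mem (valP t)))).

Lemma cone_simplex_val n (s : I01) (t : simplex R n) :
  set_val (cone_simplex s t) = cone_coord (set_val s) (set_val t).
Proof. by []. Qed.

Lemma cone_simplex_continuous n :
  continuous (fun p : (I01 * simplex R n)%type => cone_simplex p.1 p.2).
Proof.
apply: (@continuous_comp_initial _ _ 'rV[R]_n.+2 set_val).
apply: continuous_mx => i j; rewrite (ord1 i).
have fst_cont : continuous (fun p : (I01 * simplex R n)%type => set_val p.1 : R).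
  move=> p; apply: (@continuous_comp _ _ _ fst); first exact: cvg_fst.
  exact: val_unit_interval_continuous.
under [X in continuous X]funext => p do rewrite /= mxE.
case: (unlift ord0 j) => [k|] //; move=> p; apply: cvgM.
  by apply: cvgB; [exact: cvg_cst | exact: fst_cont].
apply: (@continuous_comp _ _ _ snd (fun t : simplex R n => set_val t ord0 k)).
  exact: cvg_snd.
apply: (@continuous_comp _ _ _ set_val (fun M : 'rV[R]_n.+1 => M ord0 k)).
  exact: initial_continuous.
exact: coord_continuous.
Qed.

Definition cone_point (s : I01) (p : Pts) : Pts :=
  existT (real_piece X R) (projT1 p).+1
    ((cone (projT2 p).1 : sobj X (projT1 p).+1), cone_simplex s (projT2 p).2).

Lemma cone_point_continuous :
  continuous (fun p : (I01 * Pts)%type => cone_point p.1 p.2).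
Proof.
case=> s [n [x t]] U /= nU.
have [[A B] /= [nA nB] sAB] :
    nbhs (((cone x : sobj X n.+1), cone_simplex s t) : real_piece X R n.+1)
      (fun y => U (existT _ n.+1 y)) by exact: nU.
have [[A1 B1] /= [nA1 nB1] sAB1] : nbhs ((s, t) : (I01 * simplex R n)%type)
    ((fun p : (I01 * simplex R n)%type => cone_simplex p.1 p.2) @^-1` B).
  exact: (@cone_simplex_continuous n (s, t) B nB).
exists (A1, existT _ n @` ([set x] `*` B1)) => /=.
  split => //; apply: (@existT_nbhs _ (real_piece X R) n (x, t)).
  by exists ([set x], B1) => //=; split.
case=> s' _ /= [A1s' [[x' t'] [/= -> B1t'] <-]].
apply: (sAB (cone x, cone_simplex s' t')); split => /=.
  exact: (nbhs_singleton nA).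
exact: (sAB1 (s', t') (conj A1s' B1t')).
Qed.

Lemma real_gen_rel (a b : Pts) : real_gen a b -> real_rel a b.
Proof. by move=> g; apply/asboolP => E _ _ _; apply. Qed.

Lemma cone_point_gen s a b :
  real_gen a b -> real_gen (cone_point s a) (cone_point s b).
Proof.
case=> m [n [th [x [t [t' [mth -> -> tt']]]]]].
exists m.+1, n.+1, (cone_map th), (cone x), (cone_simplex s t), (cone_simplex s t').
split=> //; first exact: mono_cone_map.
- by rewrite /cone_point /= cone_cone_map.
- by rewrite !cone_simplex_val tt' push_cone_map.
Qed.

Lemma cone_point_rel s a b :
  real_rel a b -> real_rel (cone_point s a) (cone_point s b).
Proof.
move=> /asboolP ab.
apply: (ab (fun a b => real_rel (cone_point s a) (cone_point s b))).
- by move=> x; exact: real_rel_refl.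
- by move=> x y; rewrite real_rel_sym.
- by move=> x y z; apply: real_rel_trans.
- by move=> x y /(cone_point_gen s) /real_gen_rel.
Qed.

Lemma cone_point0 s a : set_val s = 0 -> real_gen a (cone_point s a).
Proof.
case: a => n [x t] s0.
exists n, n.+1, (coface0 n), (cone x), t, (cone_simplex s t); split.
- exact: mono_coface0.
- by rewrite /= cone_coface0.
- by [].
- by rewrite cone_simplex_val push_coface0 s0.
Qed.

Definition unit_vertex : Pts :=
  existT (real_piece X R) 0
    ((dummy_unit sg_map1 : sobj X 0),
     exist _ (vertex R) (mem_set (vertex_simplex R))).

Lemma cone_point1 s a : set_val s = 1 -> real_gen unit_vertex (cone_point s a).
Proof.
case: a => n [x t] s1.
exists 0%N, n.+1, (vertex0 n), (cone x); eexists; exists (cone_simplex s t); split.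
- exact: mono_vertex0.
- by rewrite /= cone_vertex0.
- by [].
- by rewrite cone_simplex_val (push_vertex0 (set_val t)) s1.
Qed.

Lemma real_rel_pi a b : real_rel a b -> piX a = piX b.
Proof. by move=> ab; apply/eqquotP. Qed.

Definition cone_homotopy (sq : (I01 * realization X R)%type) : realization X R :=
  piX (cone_point sq.1 (repr sq.2)).

Lemma cone_homotopy_pi s a : cone_homotopy (s, piX a) = piX (cone_point s a).
Proof.
apply/real_rel_pi/cone_point_rel.
by apply/(@eqquotP _ _ {eq_quot (real_equiv_rel X R)}); rewrite reprK.
Qed.

Lemma cone_homotopy_continuous : continuous cone_homotopy.
Proof.
apply: prod_quotient_continuous; first exact: unit_interval_compact_nbhs.
under [X in continuous X]funext => p do rewrite cone_homotopy_pi.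
move=> p; apply: continuous_comp; first exact: cone_point_continuous.
exact: pi_continuous.
Qed.

End ConeRealization.

Theorem mainTheorem10 (R : realType) (G : sGroup) :
  is_simplicial_group G -> contractible R (realization (dummy G) R).
Proof.
move=> [_ sgG].
have sg_map1 m n (th : {ffun 'I_m.+1 -> 'I_n.+1}) :
    mono th -> sg_map G th monoid.one = monoid.one.
  by move=> mth; case: (sgG m n th mth).
exists (\pi_(realization (dummy G) R) (unit_vertex R sg_map1)).
exists (@cone_homotopy R G); split.
- exact: cone_homotopy_continuous.
- move=> s x s0; rewrite -{2}[x]reprK; apply: real_rel_pi.
  by rewrite real_rel_sym; apply: real_gen_rel; exact: cone_point0.
- move=> s x s1; apply: real_rel_pi.
  by rewrite real_rel_sym; apply: real_gen_rel; exact: cone_point1.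
Qed.
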